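(* Let $\varLambda\subseteq\mathbb{Z}$ be relatively dense in $\mathbb{R}$, and assume that the density autocorrelation $\gamma:=\gamma_{\mathrm{dens}}$ of $\varLambda$ exists with respect to $\mathcal{A}=([-n,n])_n$. For each $n\ge3$ set $\varGamma_n=n!+(\varLambda\cap[-n,n])$ and define $\varGamma=\bigcup_{n\ge3}\varGamma_n$ (a disjoint union). Then, with respect to $\mathcal{A}$: (a) the density of $\varGamma$ exists and equals $0$, i.e. $\lim_{n\to\infty}\frac{\mathrm{card}(\varGamma\cap[-n,n])}{2n}=0$; (b) the counting autocorrelation of $\varGamma$ exists and $\gamma_{\mathrm{count}}=C\gamma$, where $C=\frac{1}{\gamma(\{0\})}=\frac{1}{\mathrm{dens}(\varLambda)}\neq0$, with $\mathrm{dens}(\varLambda)=\lim_{n\to\infty}\frac{\mathrm{card}(\varLambda\cap[-n,n])}{2n}$.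
   Context: For a locally finite $X\subseteq\mathbb{R}$ and $A_n=[-n,n]$, let $F_n=X\cap A_n$. The density autocorrelation of $X$ is the vague limit (convergence on all compactly supported continuous functions) $\gamma_{\mathrm{dens}}=\lim_n\frac{1}{2n}\sum_{x,y\in F_n}\delta_{x-y}$, and the counting autocorrelation is the vague limit $\gamma_{\mathrm{count}}=\lim_n\gamma_{F_n}$, where $\gamma_F=\frac{1}{\mathrm{card}(F)}\sum_{x,y\in F}\delta_{x-y}$ for finite nonempty $F$ and $\gamma_\emptyset=0$. Relatively dense means there is $R>0$ such that every interval of length $R$ meets $\varLambda$. *)

From HB Require Import structures.
From mathcomp Require Import all_boot all_order all_algebra.
From mathcomp Require Import all_classical all_reals all_analysis.
Set Implicit Arguments. Unset Strict Implicit. Unset Printing Implicit Defensive.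
Import Order.TTheory GRing.Theory Num.Theory.
Import numFieldNormedType.Exports.
Local Open Scope classical_set_scope.
Local Open Scope ring_scope.

(* Point sets X ⊆ ℤ ⊆ ℝ are represented by X : set int (embedded via intr). *)

Definition window (n : nat) : seq int :=
  [seq (i%:Z - n%:Z) | i <- iota 0 (2 * n).+1].

Definition Fwin (X : set int) (n : nat) : seq int :=
  [seq k <- window n | k \in X].

Definition dens_seq (R : realType) (X : set int) (n : nat) : R :=
  (size (Fwin X n))%:R / (2 * n)%:R.

(* Pairing of a finite sum of Dirac measures sum_{x,y in F} delta_{x-y}
   with a test function f. *)
Definition pair_sum (R : realType) (F : seq int) (f : R -> R) : R :=
  \sum_(x <- F) \sum_(y <- F) f ((x - y)%:~R).

Definition dens_autocorr_seq (R : realType) (X : set int) (f : R -> R)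
  (n : nat) : R :=
  pair_sum (Fwin X n) f / (2 * n)%:R.

Definition count_autocorr_seq (R : realType) (X : set int) (f : R -> R)
  (n : nat) : R :=
  if size (Fwin X n) == 0%N then 0
  else pair_sum (Fwin X n) f / (size (Fwin X n))%:R.

Definition Cc (R : realType) (f : R -> R) : Prop :=
  continuous f /\ exists M : R, forall x : R, M < `|x| -> f x = 0.

Definition vague_cvg (R : realType) (mu : (R -> R) -> nat -> R)
  (gamma : {measure set R -> \bar R}) : Prop :=
  forall f : R -> R, Cc f ->
    gamma.-integrable setT (fun x => (f x)%:E) /\
    mu f @ \oo --> fine (\int[gamma]_x (f x)%:E).

Definition rel_dense (R : realType) (X : set int) : Prop :=
  exists R0 : R, 0 < R0 /\
    forall a : R, exists k : int, X k /\ a <= k%:~R <= a + R0.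

Definition Gamma_set (L : set int) : set int :=
  [set z | exists n : nat, (3 <= n)%N /\ L (z - (n`!)%:Z) /\
                           `|z - (n`!)%:Z| <= n%:Z].

(* Γ is the union of the blocks Γ_a = a! + (Λ ∩ [-a, a]), a >= 3, whose gaps grow
   much faster than the blocks themselves.  If A! - A <= N < (A+1)! - (A+1), the
   window [-N, N] contains the complete blocks Γ_a with a < A, part of Γ_A and
   nothing else.  Hence card(Γ ∩ [-N, N]) = O(A^2) while N >= A! - A, and the
   density of Γ vanishes.
   For a test function supported in [-W, W], two distinct blocks do not interact
   as soon as one of them has index > W.  So, up to O(1) coming from the small
   blocks and O(A) coming from Γ_A, the pair sum of Γ ∩ [-N, N] is the sum of the
   pair sums of the windows Λ ∩ [-a, a], each of which is close to
   γ(f) / dens(Λ) * card(Λ ∩ [-a, a]).  Relative density gives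
   card(Γ ∩ [-N, N]) >= c A^2, which absorbs both errors.
   Finally dens(Λ) = γ({0}): hat functions shrinking to the indicator of 0 are the
   indicator of 0 on ℤ, so they read off the diagonal of the pair sums, and
   dominated convergence passes to the limit. *)

From HB Require Import structures.
From mathcomp Require Import all_boot all_order all_algebra.
From mathcomp Require Import all_classical all_reals all_analysis.
From mathcomp Require Import measurable_realfun zify ring lra.
Set Implicit Arguments. Unset Strict Implicit. Unset Printing Implicit Defensive.
Import Order.TTheory GRing.Theory Num.Theory.
Import numFieldNormedType.Exports.
Local Open Scope classical_set_scope.
Local Open Scope ring_scope.

Lemma mem_window n z : (z \in window n) = (`|z| <= n%:Z).
Proof.
apply/mapP/idP => [[i]|h].
  by rewrite mem_iota add0n => /andP[_ hi] ->; lia.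
exists (absz (z + n%:Z)); last by lia.
by rewrite mem_iota add0n; apply/andP; split => //; lia.
Qed.

Lemma uniq_window n : uniq (window n).
Proof. by rewrite map_inj_uniq ?iota_uniq // => i j /=; lia. Qed.

Lemma size_window n : size (window n) = (2 * n).+1.
Proof. by rewrite size_map size_iota. Qed.

Lemma mem_Fwin X n z : (z \in Fwin X n) = (`|z| <= n%:Z) && (z \in X).
Proof. by rewrite mem_filter andbC mem_window. Qed.

Lemma uniq_Fwin X n : uniq (Fwin X n).
Proof. exact/filter_uniq/uniq_window. Qed.

Lemma size_Fwin_le X n : (size (Fwin X n) <= (2 * n).+1)%N.
Proof. by rewrite -(size_window n) size_filter count_size. Qed.

Lemma size_filter_dist_le (s : seq int) x W : uniq s ->
  (size [seq y <- s | (`|x - y| <= W%:Z)%R] <= (2 * W).+1)%N.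
Proof.
move=> us; rewrite -(size_window W) -[size (window W)](size_map (fun z => x - z)).
apply: uniq_leq_size; first by rewrite filter_uniq.
move=> y; rewrite mem_filter => /andP[h _]; apply/mapP; exists (x - y).
  by rewrite mem_window.
by rewrite opprB addrC subrK.
Qed.

Lemma sumr_const_seq (V : nmodType) (T : Type) (s : seq T) (P : pred T) (c : V) :
  \sum_(i <- s | P i) c = c *+ count P s.
Proof. by rewrite big_const_seq iter_addr_0. Qed.

Lemma big_seq_partition (V : nmodType) (I T : eqType) (r : seq I) (s : seq T)
    (P : I -> pred T) (h : T -> V) : uniq r ->
  {in s, forall z, exists a, [/\ a \in r, P a z & {in r, forall b, P b z -> b = a}]} ->
  \sum_(z <- s) h z = \sum_(a <- r) \sum_(z <- s | P a z) h z.
Proof.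
move=> ur hP; rewrite [RHS](exchange_big_dep predT) //=.
apply: eq_big_seq => z /hP[a [ar Paz aP]].
rewrite big_mkcond (bigD1_seq a) //= Paz big1_seq ?addr0 // => b /andP[ba br].
case: ifP => // Pbz.
by rewrite (aP b br Pbz) eqxx in ba.
Qed.

Lemma linear_error_le (F : realFieldType) (eps c k a r C : F) :
  0 <= c -> 0 <= k -> 1 <= a -> 0 < r ->
  r * (c + 3 * k) < eps * a -> a * a <= r * C ->
  c + k * (2 * a + 1) <= eps * C.
Proof.
move=> c_ge0 k_ge0 a_ge1 r_gt0 small quad.
have lin : c + k * (2 * a + 1) <= (c + 3 * k) * a.
  have a1 : 0 <= a - 1 by rewrite subr_ge0.
  by have := mulr_ge0 c_ge0 a1; have := mulr_ge0 k_ge0 a1; nra.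
rewrite (le_trans lin) // -(ler_pM2l r_gt0).
have rck_ge0 : 0 <= r * (c + 3 * k) by rewrite mulr_ge0 ?addr_ge0 ?mulr_ge0 // ltW.
have a_gt0 : 0 < a := lt_le_trans ltr01 a_ge1.
have eps_ge0 : 0 <= eps.
  by have := le_lt_trans rck_ge0 small; rewrite pmulr_lgt0 // => /ltW.
have : 0 <= eps * (r * C - a * a) by rewrite mulr_ge0 // subr_ge0.
have : 0 <= (eps * a - r * (c + 3 * k)) * a by rewrite mulr_ge0 ?subr_ge0 // ltW.
nra.
Qed.

Lemma dist_ratio_le (F : realFieldType) (Q S C e : F) : 0 < C ->
  (`|Q - S / C| <= e) = (`|S - Q * C| <= e * C).
Proof.
move=> C_gt0; have -> : Q - S / C = (Q * C - S) / C by rewrite mulrBl mulfK ?gt_eqF.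
by rewrite normrM normfV (gtr0_norm C_gt0) ler_pdivrMr // distrC.
Qed.

Lemma double_leq_fact a : (3 <= a)%N -> (2 * a <= a`!)%N.
Proof.
elim: a => // a IH; rewrite leq_eqVlt => /orP[/eqP <-|] //.
by rewrite ltnS => /[dup] a3 /IH; rewrite factS; nia.
Qed.

Lemma fact_gap a b : (3 <= a)%N -> (a < b)%N -> (a`! + a + 2 * b <= b`!)%N.
Proof.
move=> a3; elim: b => // b IH; rewrite ltnS leq_eqVlt factS.
have step c : (3 <= c)%N -> (c`! + c + 2 * c.+1 <= c.+1 * c`!)%N.
  by move=> c3; have := double_leq_fact c3; nia.
case/orP=> [/eqP <-|ab]; first exact: step.
by have := IH ab; have := step b (leq_trans a3 (ltnW ab)); nia.
Qed.

Lemma leq_fact_sub a b : (3 <= a)%N -> (a <= b)%N -> (a`! - a <= b`! - b)%N.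
Proof.
move=> a3; rewrite leq_eqVlt => /orP[/eqP <-//|ab].
by have := fact_gap a3 ab; lia.
Qed.

Lemma cube_leq_fact a : (6 <= a)%N -> (a ^ 3 <= a`!)%N.
Proof.
elim: a => // a IH; rewrite leq_eqVlt => /orP[/eqP <-|] //.
by rewrite ltnS => /[dup] a6 /IH; rewrite factS; nia.
Qed.

Lemma fact_bracket N : (3 <= N)%N ->
  exists A, [/\ (3 <= A)%N, (A`! - A <= N)%N & (N < A.+1`! - A.+1)%N].
Proof.
move=> hN; have [k ->] : exists k, N = (k + 3)%N by exists (N - 3)%N; lia.
elim: k => [|k [A [A3 h1 h2]]]; first by exists 3%N.
case: (ltnP (k.+1 + 3) (A.+1`! - A.+1)) => h; first by exists A; split => //; lia.
exists A.+1; split => //; first lia.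
by have := @fact_gap A.+1 A.+2 ltac:(lia) (ltnSn _); lia.
Qed.

Lemma fact_bracket_ge A0 A N : (3 <= A)%N ->
  (A0`! - A0 <= N)%N -> (N < A.+1`! - A.+1)%N -> (A0 <= A)%N.
Proof.
move=> A3 A0N NA; rewrite leqNgt; apply/negP => /(@leq_fact_sub A.+1 A0 (ltnW A3)).
by lia.
Qed.

Lemma fact_bracket_full a A N : (3 <= a)%N -> (a < A)%N ->
  (A`! - A <= N)%N -> (a`! + a <= N)%N.
Proof. by move=> a3 aA; have := fact_gap a3 aA; lia. Qed.

Lemma fact_bracket_empty a A N : (3 <= A)%N -> (A < a)%N ->
  (N < A.+1`! - A.+1)%N -> (N < a`! - a)%N.
Proof. by move=> A3 Aa NA; exact: leq_trans NA (@leq_fact_sub A.+1 a (ltnW A3) Aa). Qed.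

Definition in_block (a : nat) (z : int) : bool := `|z - (a`!)%:Z| <= a%:Z.

Definition block_part (L : set int) (a N : nat) : seq int :=
  [seq j <- Fwin L a | (a`!)%:Z + j <= N%:Z].

Definition block (L : set int) (a N : nat) : seq int :=
  [seq (a`!)%:Z + j | j <- block_part L a N].

Lemma in_block_inj a b z : (3 <= a)%N -> (3 <= b)%N ->
  in_block a z -> in_block b z -> a = b.
Proof.
rewrite /in_block => a3 b3 ha hb; case: (ltngtP a b) => // hab.
- by have := fact_gap a3 hab; lia.
- by have := fact_gap b3 hab; lia.
Qed.

Lemma in_block_ge a z : (3 <= a)%N -> in_block a z -> a%:Z <= z.
Proof. by rewrite /in_block => a3; have := double_leq_fact a3; lia. Qed.

Section Blocks.
Variable L : set int.

Lemma uniq_block a N : uniq (block L a N).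
Proof. by rewrite map_inj_uniq; [exact/filter_uniq/uniq_Fwin | exact: addrI]. Qed.

Lemma mem_block a N x : x \in block L a N ->
  exists j, [/\ x = (a`!)%:Z + j, `|j| <= a%:Z, (a`!)%:Z + j <= N%:Z & L j].
Proof.
case/mapP => j; rewrite mem_filter mem_Fwin => /and3P[hN hj /set_mem hL] ->.
by exists j.
Qed.

Lemma perm_block a N : (3 <= a)%N ->
  perm_eq [seq z <- Fwin (Gamma_set L) N | in_block a z] (block L a N).
Proof.
move=> a3; apply: uniq_perm; [exact/filter_uniq/uniq_Fwin | exact: uniq_block |].
move=> z; rewrite mem_filter mem_Fwin; apply/idP/mapP.
  case/and3P => za zN /set_mem [b [b3 [Lb zb]]].
  have eab := in_block_inj a3 b3 za zb; subst b.
  exists (z - (a`!)%:Z); last by rewrite addrC subrK.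
  rewrite mem_filter mem_Fwin; move: za zN; rewrite /in_block => za zN.
  by rewrite (mem_set Lb) andbT; apply/andP; split; lia.
case=> j; rewrite mem_filter mem_Fwin => /and3P[jN ja /set_mem Lj] ->.
have za : in_block a ((a`!)%:Z + j) by rewrite /in_block; lia.
have := double_leq_fact a3; rewrite za /= => a2.
apply/andP; split; first lia.
by apply: mem_set; exists a; rewrite [_ + j]addrC addrK.
Qed.

Lemma big_Fwin_Gamma (V : nmodType) N (h : int -> V) :
  \sum_(z <- Fwin (Gamma_set L) N) h z =
  \sum_(a <- iota 3 N) \sum_(z <- block L a N) h z.
Proof.
rewrite (big_seq_partition (P := in_block) h (iota_uniq 3 N)); last first.
  move=> z; rewrite mem_Fwin => /andP[zN /set_mem [a [a3 [_ za]]]].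
  exists a; split => //; last first.
    by move=> b; rewrite mem_iota => /andP[b3 _] zb; exact: in_block_inj zb za.
  by rewrite mem_iota a3 /=; have := in_block_ge a3 za; lia.
apply: eq_big_seq => a; rewrite mem_iota => /andP[a3 _].
by rewrite -big_filter; apply: perm_big; exact: perm_block.
Qed.

Lemma size_Fwin_Gamma N :
  size (Fwin (Gamma_set L) N) = (\sum_(a <- iota 3 N) size (block_part L a N))%N.
Proof.
rewrite -sum1_size (big_Fwin_Gamma (V := nat)); apply: eq_bigr => a _.
by rewrite sum1_size size_map.
Qed.

Lemma size_block_part_le a N : (size (block_part L a N) <= (2 * a).+1)%N.
Proof. by rewrite size_filter (leq_trans (count_size _ _)) ?size_Fwin_le. Qed.

Lemma block_part_full a N : (a`! + a <= N)%N -> block_part L a N = Fwin L a.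
Proof.
move=> aN; apply/all_filterP/allP => j; rewrite mem_Fwin => /andP[ja _].
by move: aN; lia.
Qed.

Lemma block_part_empty a N : (3 <= a)%N -> (N < a`! - a)%N ->
  block_part L a N = [::].
Proof.
move=> a3 Na; have := double_leq_fact a3 => a2.
apply/eqP; rewrite -size_eq0 size_filter -leqn0 leqNgt -has_count.
by apply/hasPn => j; rewrite mem_Fwin => /andP[ja _] /=; lia.
Qed.

Lemma pair_sum_block (R : realType) (f : R -> R) a N :
  \sum_(x <- block L a N) \sum_(y <- block L a N) f ((x - y)%:~R) =
  pair_sum (block_part L a N) f.
Proof.
rewrite big_map; apply: eq_bigr => j _; rewrite big_map; apply: eq_bigr => k _.
by rewrite opprD addrACA subrr add0r.
Qed.

End Blocks.

Section BoundedSupport.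
Variables (R : realType) (f : R -> R) (W : nat).
Hypothesis f_supp : forall t : R, W%:R < `|t| -> f t = 0.

Definition int_l1 := \sum_(k <- window W) `|f k%:~R|.

Lemma f_int_out (k : int) : W%:Z < `|k| -> f k%:~R = 0.
Proof.
by move=> Wk; apply: f_supp; rewrite -intr_norm -[W%:R]/((W%:Z)%:~R : R) ltr_int.
Qed.

Lemma norm_f_int_le k : `|f k%:~R| <= int_l1.
Proof.
have [kW|kW] := boolP (k \in window W).
  by rewrite /int_l1 (bigD1_seq k) ?uniq_window //= lerDl sumr_ge0.
by rewrite f_int_out ?normr0 ?sumr_ge0 // ltNge -mem_window.
Qed.

Lemma row_sum_le (s : seq int) x : uniq s ->
  `|\sum_(y <- s) f (x - y)%:~R| <= int_l1 * ((2 * W).+1)%:R.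
Proof.
move=> us; rewrite (bigID (fun y => `|x - y| <= W%:Z)) /=.
rewrite [X in _ + X]big1 ?addr0 => [|y]; last by rewrite -ltNge => /f_int_out.
apply: le_trans (ler_norm_sum _ _ _) _.
apply: le_trans (ler_sum _ (fun y _ => norm_f_int_le (x - y))) _.
rewrite sumr_const_seq -size_filter -[X in X <= _]mulr_natr.
by rewrite ler_wpM2l ?sumr_ge0 // ler_nat size_filter_dist_le.
Qed.

Lemma row_sum_Gamma L a N x : (3 <= a)%N -> (W < a)%N -> x \in block L a N ->
  \sum_(y <- Fwin (Gamma_set L) N) f (x - y)%:~R =
  \sum_(y <- block L a N) f (x - y)%:~R.
Proof.
move=> a3 Wa /mem_block [j [-> ja jN _]]; rewrite big_Fwin_Gamma.
have aN : a \in iota 3 N by rewrite mem_iota a3 /=; have := double_leq_fact a3; lia.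
rewrite (bigD1_seq a) ?iota_uniq //= [X in _ + X]big1_seq ?addr0 // => b.
rewrite mem_iota => /andP[ba /andP[b3 _]].
apply: big1_seq => y /andP[_ /mem_block [k [-> kb _ _]]]; apply: f_int_out.
case: (ltngtP a b) => ab; last by rewrite ab eqxx in ba.
- by have := fact_gap a3 ab; lia.
- by have := fact_gap b3 ab; lia.
Qed.

End BoundedSupport.

Definition dense_windows (L : set int) (R1 : nat) : Prop :=
  forall a, ((2 * a).+1 <= (size (Fwin L a) + 1) * R1)%N.

Lemma count_runs_ge (L : set int) (R1 : nat) (b0 : int) :
  (forall b : int, exists k, L k /\ b <= k < b + R1%:Z) ->
  forall K m, (K <= count (fun i : nat => (b0 + i%:Z)%R \in L) (iota m (K * R1)))%N.
Proof.
move=> runs; elim => [//|K IH] m; rewrite mulSn iotaD count_cat.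
suff : (0 < count (fun i : nat => (b0 + i%:Z)%R \in L) (iota m R1))%N.
  by have := IH (m + R1)%N; lia.
rewrite -has_count; have [k [Lk kb]] := runs (b0 + m%:Z).
apply/hasP; exists (absz (k - b0)); first by rewrite mem_iota; lia.
have -> : b0 + (absz (k - b0))%:Z = k by lia.
exact: mem_set.
Qed.

Lemma rel_dense_windows (R : realType) L : rel_dense R L ->
  exists R1, (0 < R1)%N /\ dense_windows L R1.
Proof.
case=> R0 [R0_gt0 hR]; set R1 := (Num.truncn R0).+1.
have runs (b : int) : exists k, L k /\ b <= k < b + R1%:Z.
  have [k [Lk /andP[bk kb]]] := hR b%:~R.
  exists k; split => //; rewrite -(ler_int R) bk /= -(ltr_int R) intrD.
  by apply: le_lt_trans kb _; rewrite ltrD2l truncnS_gt.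
exists R1; split => // a; set K := ((2 * a).+1 %/ R1)%N.
have K_le : (K * R1 <= (2 * a).+1)%N by exact: leq_trunc_div.
have K_gt : ((2 * a).+1 < K.+1 * R1)%N by exact: ltn_ceil.
suff KF : (K <= size (Fwin L a))%N.
  by apply: leq_trans (ltnW K_gt) _; rewrite addn1 leq_mul2r ltnS KF orbT.
rewrite size_filter /window count_map -(subnKC K_le) iotaD count_cat.
apply: leq_trans (leq_addr _ _); apply: leq_trans (count_runs_ge (- a%:Z) runs K 0) _.
by apply: eq_leq; apply: eq_count => i /=; rewrite addrC.
Qed.

Lemma sum_iota_odd k : (\sum_(a <- iota 3 k) (2 * a + 1) = (k + 3) * (k + 3) - 9)%N.
Proof.
elim: k => [|k IH]; first by rewrite big_nil.
by rewrite -[k.+1]addn1 iotaD big_cat /= IH big_seq1; lia.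
Qed.

Lemma count_iota_lt B m N : (count (fun a => (a < B)%N) (iota m N) <= B)%N.
Proof.
rewrite -size_filter -[X in (_ <= X)%N](size_iota 0 B).
apply: uniq_leq_size; first by rewrite filter_uniq // iota_uniq.
by move=> a; rewrite mem_filter !mem_iota => /andP[h _]; lia.
Qed.

Lemma size_Gamma_ge L R1 N A : dense_windows L R1 ->
  (3 <= A)%N -> (A`! - A <= N)%N -> (2 * R1 + 5 <= A)%N ->
  (A * A <= 2 * R1 * size (Fwin (Gamma_set L) N))%N.
Proof.
move=> dense A3 AN R1A; have := double_leq_fact A3 => A2.
have iota_split : iota 3 N = iota 3 (A - 3) ++ iota A (N + 3 - A).
  by rewrite -[X in iota X (N + 3 - A)](subnKC A3) -iotaD; congr iota; lia.
have full :
    (\sum_(a <- iota 3 (A - 3)) size (Fwin L a) <= size (Fwin (Gamma_set L) N))%N.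
  rewrite size_Fwin_Gamma iota_split big_cat /=; apply: leq_trans (leq_addr _ _).
  rewrite big_seq [X in (_ <= X)%N]big_seq; apply/eq_leq/eq_bigr => a.
  rewrite mem_iota => /andP[a3 aA]; rewrite block_part_full //.
  by apply: fact_bracket_full AN; rewrite // -subn_gt0; lia.
have odd : ((A - 3 + 3) * (A - 3 + 3) - 9 <=
            R1 * (\sum_(a <- iota 3 (A - 3)) size (Fwin L a) + (A - 3)))%N.
  rewrite -sum_iota_odd -[X in (_ <= R1 * (_ + X))%N](size_iota 3 (A - 3)) -sum1_size.
  rewrite -big_split big_distrr /=; apply: leq_sum => a _.
  by have := dense a; nia.
by move: odd full; set S := (\sum_(_ <- _) _)%N; set C := size _; nia.
Qed.

Lemma size_Gamma_le L N A : (3 <= A)%N -> (N < A.+1`! - A.+1)%N ->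
  (size (Fwin (Gamma_set L) N) <= A.+1 * (2 * A).+1)%N.
Proof.
move=> A3 NA; rewrite size_Fwin_Gamma.
apply: (@leq_trans (\sum_(a <- iota 3 N | (a < A.+1)%N) (2 * A).+1)).
  rewrite [X in (_ <= X)%N]big_mkcond big_seq [X in (_ <= X)%N]big_seq /=.
  apply: leq_sum => a.
  rewrite mem_iota => /andP[a3 _]; case: ltnP => aA.
    by apply: leq_trans (size_block_part_le _ _ _) _; lia.
  by rewrite block_part_empty // (fact_bracket_empty A3 aA).
by rewrite big_const_seq iter_addn_0 mulnC leq_mul2r count_iota_lt orbT.
Qed.

Lemma size_Gamma_mul_le L N A : (6 <= A)%N ->
  (A`! - A <= N)%N -> (N < A.+1`! - A.+1)%N ->
  (A * size (Fwin (Gamma_set L) N) <= 12 * N)%N.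
Proof.
move=> A6 AN NA; have := size_Gamma_le L (leq_trans (isT : 3 <= 6)%N A6) NA.
have := cube_leq_fact A6; set C := size _; nia.
Qed.

Lemma dens_Gamma_cvg0 (R : realType) L : dens_seq R (Gamma_set L) @ \oo --> 0.
Proof.
apply/cvgrPdist_le => e e_gt0.
set A0 := maxn 6 (Num.truncn (6 / e)).+1.
have A0_gt : 6 / e < A0%:R.
  by apply: lt_le_trans (truncnS_gt _) _; rewrite ler_nat leq_maxr.
near=> N.
have N3 : (3 <= N)%N by near: N; exact: nbhs_infty_ge.
have A0N : (A0`! - A0 <= N)%N by near: N; exact: nbhs_infty_ge.
have [A [A3 AN NA]] := fact_bracket N3.
have A0A : (A0 <= A)%N := fact_bracket_ge A3 A0N NA.
have := size_Gamma_mul_le L (leq_trans (leq_maxl _ _) A0A) AN NA.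
rewrite -(ler_nat R) /dens_seq sub0r normrN ger0_norm ?divr_ge0 // => key.
rewrite ler_pdivrMr ?ltr0n ?muln_gt0 ?(leq_trans _ N3) // natrM.
have eA : 6 < e * A%:R by rewrite -ltr_pdivrMl // mulrC (lt_le_trans A0_gt) ?ler_nat.
rewrite !natrM in key; set C := (size _)%:R in key *.
have h1 : 0 <= e * (12 * N%:R - A%:R * C) by rewrite mulr_ge0 ?subr_ge0 // ltW.
have h2 : 0 <= (e * A%:R - 6) * C by rewrite mulr_ge0 ?subr_ge0 // ltW.
nra.
Unshelve. all: by end_near.
Qed.

Section CountAutocorrelation.
Variables (R : realType) (L : set int) (f : R -> R) (W : nat) (Q : R).
Hypothesis f_supp : forall t : R, W%:R < `|t| -> f t = 0.

Let K := int_l1 f W * ((2 * W).+1)%:R + `|Q|.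

Let K_ge0 : 0 <= K.
Proof. by rewrite addr_ge0 ?mulr_ge0 ?sumr_ge0. Qed.

Definition block_error a N :=
  \sum_(x <- block L a N) \sum_(y <- Fwin (Gamma_set L) N) f (x - y)%:~R -
  Q * (size (block_part L a N))%:R.

Lemma pair_sum_Gamma_error N :
  pair_sum (Fwin (Gamma_set L) N) f - Q * (size (Fwin (Gamma_set L) N))%:R =
  \sum_(a <- iota 3 N) block_error a N.
Proof.
by rewrite /pair_sum big_Fwin_Gamma size_Fwin_Gamma natr_sum mulr_sumr -sumrB.
Qed.

Lemma block_error_le a N : `|block_error a N| <= K * (size (block_part L a N))%:R.
Proof.
apply: le_trans (ler_normB _ _) _; rewrite normrM normr_nat mulrDl lerD2r.
apply: le_trans (ler_norm_sum _ _ _) _.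
apply: le_trans (ler_sum _ (fun x _ => row_sum_le f_supp x (uniq_Fwin _ _))) _.
by rewrite sumr_const_seq count_predT size_map -[X in X <= _]mulr_natr.
Qed.

Lemma block_error_full a N : (3 <= a)%N -> (W < a)%N -> (a`! + a <= N)%N ->
  block_error a N = pair_sum (Fwin L a) f - Q * (size (Fwin L a))%:R.
Proof.
move=> a3 Wa aN; rewrite /block_error -(block_part_full L aN) -pair_sum_block.
congr (_ - _); apply: eq_big_seq => x xa.
exact: (row_sum_Gamma f_supp a3 Wa xa).
Qed.

Lemma block_error_empty a N : (3 <= a)%N -> (N < a`! - a)%N -> block_error a N = 0.
Proof.
by move=> a3 Na; rewrite /block_error /block block_part_empty // big_nil mulr0 subrr.
Qed.

Section Estimate.
Variables (eps : R) (a1 A N : nat).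
Hypotheses (eps_ge0 : 0 <= eps) (a1W : (W < a1)%N) (A3 : (3 <= A)%N).
Hypotheses (AN : (A`! - A <= N)%N) (NA : (N < A.+1`! - A.+1)%N).
Hypothesis Fwin_error : forall a, (a1 <= a)%N ->
  `|pair_sum (Fwin L a) f - Q * (size (Fwin L a))%:R| <= eps * (size (Fwin L a))%:R.

(* Small blocks [a < a1] may interact, the block [a = A] is the one cut by
   [N], the remaining nonempty blocks are complete and far apart. *)
Lemma block_error_le_cases a : a \in iota 3 N ->
  `|block_error a N| <=
  (if (a < a1)%N then K * ((2 * a1).+1)%:R else 0) +
  eps * (size (block_part L a N))%:R +
  (if a == A then K * ((2 * A).+1)%:R else 0).
Proof.
rewrite mem_iota => /andP[a3 _].
have Ka b : (a <= b)%N -> `|block_error a N| <= K * ((2 * b).+1)%:R.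
  move=> ab; apply: le_trans (block_error_le _ _) _.
  by rewrite ler_wpM2l ?K_ge0 // ler_nat (leq_trans (size_block_part_le _ _ _)) //; lia.
have t1 : 0 <= (if (a < a1)%N then K * ((2 * a1).+1)%:R else 0).
  by case: ifP; rewrite ?mulr_ge0.
have t2 : 0 <= eps * (size (block_part L a N))%:R by rewrite mulr_ge0.
have t3 : 0 <= (if a == A then K * ((2 * A).+1)%:R else 0).
  by case: ifP; rewrite ?mulr_ge0.
case: ltnP => a1a.
  by apply: le_trans (Ka _ (ltnW a1a)) _; rewrite -addrA lerDl addr_ge0.
case: (ltngtP a A) => aA.
- have aN := fact_bracket_full a3 aA AN.
  rewrite block_error_full //; last by lia.
  by rewrite block_part_full // add0r addr0 Fwin_error.
- by rewrite block_error_empty ?normr0 ?addr_ge0 // (fact_bracket_empty A3 aA).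
- by rewrite -aA add0r (le_trans (Ka _ (leqnn _))) // lerDr.
Qed.

Lemma pair_sum_Gamma_error_le :
  `|pair_sum (Fwin (Gamma_set L) N) f - Q * (size (Fwin (Gamma_set L) N))%:R| <=
  K * ((2 * a1).+1)%:R * a1%:R + eps * (size (Fwin (Gamma_set L) N))%:R +
  K * ((2 * A).+1)%:R.
Proof.
rewrite pair_sum_Gamma_error; apply: le_trans (ler_norm_sum _ _ _) _.
rewrite big_seq; apply: le_trans (ler_sum _ (fun a => @block_error_le_cases a)) _.
rewrite -big_seq.
rewrite !big_split /= -!big_mkcond /= !sumr_const_seq.
rewrite -[X in _ + X + _ <= _]mulr_sumr -natr_sum -size_Fwin_Gamma.
apply: lerD; first apply: lerD => //.
- by rewrite -[_ *+ count _ _]mulr_natr ler_wpM2l ?mulr_ge0 // ler_nat count_iota_lt.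
- rewrite -[X in _ <= X]mulr1 -[_ *+ count _ _]mulr_natr ler_wpM2l ?mulr_ge0 // lern1.
  by rewrite count_uniq_mem ?iota_uniq // leq_b1.
Qed.

End Estimate.

Lemma count_autocorr_Gamma_cvg R1 : (0 < R1)%N -> dense_windows L R1 ->
  (forall eps, 0 < eps -> exists a0, forall a, (a0 <= a)%N ->
    `|pair_sum (Fwin L a) f - Q * (size (Fwin L a))%:R| <=
      eps * (size (Fwin L a))%:R) ->
  count_autocorr_seq (Gamma_set L) f @ \oo --> Q.
Proof.
move=> R1_gt0 dense Fwin_error; apply/cvgrPdist_le => e e_gt0.
have eps_gt0 : 0 < e / 2 by rewrite divr_gt0.
have [a0 a0_error] := Fwin_error _ eps_gt0.
set a1 := (a0 + W + 1)%N; set Cst := K * ((2 * a1).+1)%:R * a1%:R.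
have Cst_ge0 : 0 <= Cst by rewrite !mulr_ge0.
set X := (2 * R1)%:R * (Cst + 3 * K).
set A0 := maxn (2 * R1 + 5) (Num.truncn (X / (e / 2))).+1.
have A0_gt : X / (e / 2) < A0%:R.
  by apply: lt_le_trans (truncnS_gt _) _; rewrite ler_nat leq_maxr.
near=> N.
have N3 : (3 <= N)%N by near: N; exact: nbhs_infty_ge.
have A0N : (A0`! - A0 <= N)%N by near: N; exact: nbhs_infty_ge.
have [A [A3 AN NA]] := fact_bracket N3.
have A0A : (A0 <= A)%N := fact_bracket_ge A3 A0N NA.
have R1A : (2 * R1 + 5 <= A)%N by apply: leq_trans A0A; exact: leq_maxl.
have := size_Gamma_ge dense A3 AN R1A; set C := size _ => AC.
have C_gt0 : (0 < C)%N by rewrite lt0n; apply: contraTneq AC => ->; lia.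
have a1W : (W < a1)%N by rewrite /a1; lia.
have := pair_sum_Gamma_error_le (ltW eps_gt0) a1W A3 AN NA
  (fun a a1a => a0_error a (leq_trans (leq_trans (leq_addr W a0) (leq_addr 1 _)) a1a)).
rewrite -/C -/Cst.
have absorb : Cst + K * ((2 * A).+1)%:R <= e / 2 * C%:R.
  rewrite -addn1 natrD natrM; apply: (linear_error_le (r := (2 * R1)%:R)) => //.
  - by rewrite ler1n; lia.
  - by rewrite ltr0n muln_gt0.
  - by rewrite -ltr_pdivrMl // mulrC (lt_le_trans A0_gt) // ler_nat.
  - by rewrite -!natrM ler_nat.
rewrite /count_autocorr_seq -/C (negbTE (lt0n_neq0 C_gt0)) dist_ratio_le ?ltr0n //.
by move=> err; apply: le_trans err _; rewrite [e in e * _]splitr mulrDl; lra.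
Unshelve. all: by end_near.
Qed.

End CountAutocorrelation.

Definition tent (R : realType) (k : nat) (x : R) : R :=
  Num.max 0 (1 - k.+1%:R * `|x|).

Section Tent.
Variable R : realType.

Lemma tent_continuous k : continuous (tent k : R -> R).
Proof.
have -> : @tent R k = (fun=> 0) \max (fun x => 1 - k.+1%:R * `|x|) by [].
apply: max_fun_continuous.
- exact: cst_continuous.
- move=> y; apply: cvgB; first exact: cvg_cst.
  by apply: cvgM; [exact: cvg_cst | exact: norm_continuous].
Qed.

Lemma tent_ge0 k (x : R) : 0 <= tent k x.
Proof. by rewrite /tent le_max lexx. Qed.

Lemma tent0 k : tent k (0 : R) = 1.
Proof. by rewrite /tent normr0 mulr0 subr0 max_r. Qed.

Lemma tent_out k (x : R) : 1 <= `|x| -> tent k x = 0.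
Proof.
move=> x1; rewrite /tent max_l // subr_le0 (le_trans x1) // ler_peMl //.
by rewrite ler1n.
Qed.

Lemma tent_Cc k : Cc (@tent R k).
Proof. by split; [exact: tent_continuous | exists 1 => x /ltW; exact: tent_out]. Qed.

Lemma tent_le k (x : R) : tent k x <= tent 0 x.
Proof.
by rewrite /tent ge_max le_max lexx /= le_max lerD2l lerN2 mul1r ler_peMl ?orbT ?ler1n.
Qed.

Lemma tent_int k (t : int) : tent k (t%:~R : R) = (t == 0)%:R.
Proof.
have [->|t0] := eqVneq t 0; first exact: tent0.
by apply: tent_out; rewrite -intr_norm -[1]/((1%:Z)%:~R) ler_int; lia.
Qed.

Lemma tent_cvg_indic (x : R) : tent n x @[n --> \oo] --> (\1_[set 0] x : R).
Proof.
have [->|x0] := eqVneq x 0.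
  by rewrite indicE mem_set //; apply: cvg_near_cst; apply: nearW => n; exact: tent0.
rewrite indicE memNset; last exact/eqP.
apply: cvg_near_cst; near=> n.
rewrite /tent max_l // subr_le0 -ler_pdivrMr ?normr_gt0 // div1r.
apply/ltW/(lt_le_trans (truncnS_gt _)); rewrite ler_nat.
by near: n; exact: nbhs_infty_ge.
Unshelve. all: by end_near.
Qed.

Lemma pair_sum_tent k (s : seq int) : uniq s -> pair_sum s (@tent R k) = (size s)%:R.
Proof.
move=> us; rewrite /pair_sum -sum1_size natr_sum; apply: eq_big_seq => x xs.
rewrite (bigD1_seq x) //= tent_int subrr eqxx big1_seq ?addr0 // => y /andP[yx _].
by rewrite tent_int subr_eq0 eq_sym (negbTE yx).
Qed.

Lemma dens_autocorr_tent L k : dens_autocorr_seq L (@tent R k) = dens_seq R L.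
Proof.
by apply: funext => n; rewrite /dens_autocorr_seq pair_sum_tent ?uniq_Fwin.
Qed.

End Tent.

Lemma vague_dens_measure0 (R : realType) L (gamma : {measure set R -> \bar R}) :
  vague_cvg (dens_autocorr_seq L) gamma ->
  exists d : R, dens_seq R L @ \oo --> d /\ gamma [set 0] = d%:E.
Proof.
move=> vague; set d := fine (\int[gamma]_x (tent 0 x)%:E).
have dens_d : dens_seq R L @ \oo --> d.
  by rewrite -(dens_autocorr_tent R L 0); exact: (vague _ (tent_Cc R 0)).2.
exists d; split => //.
have int_tent k : (\int[gamma]_x (tent k x)%:E)%E = d%:E.
  have [int_k cvg_k] := vague _ (tent_Cc R k).
  rewrite dens_autocorr_tent in cvg_k.
  have <- : fine (\int[gamma]_x (tent k x)%:E) = d by exact: cvg_unique cvg_k dens_d.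
  by rewrite fineK // integrable_fin_num.
have mtent k : measurable_fun setT (EFin \o @tent R k).
  by apply/measurable_EFinP; exact: continuous_measurable_fun (@tent_continuous R k).
have mindic : measurable_fun setT (EFin \o (\1_[set (0 : R)] : R -> R)).
  exact/measurable_EFinP/measurable_indic.
have tent_cvg : \forall x \ae gamma, setT x ->
    (tent n x)%:E @[n --> \oo] --> (\1_[set (0 : R)] x)%:E.
  by apply: aeW => x _; apply: cvg_EFin; [exact: nearW | exact: tent_cvg_indic].
have tent_dom : \forall x \ae gamma, forall n, setT x ->
    (`|(tent n x)%:E| <= (tent 0 x)%:E)%E.
  by apply: aeW => x n _; rewrite lee_fin ger0_norm ?tent_ge0 ?tent_le.
have [_ _] := dominated_convergence measurableT mtent mindic tent_cvg
  (vague _ (tent_Cc R 0)).1 tent_dom.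
rewrite integral_indic // setIT (_ : [sequence _]_n = fun=> d%:E); last first.
  by apply: funext => n; rewrite /= int_tent.
by move=> /(cvg_unique (@ereal_hausdorff R) (cvg_cst _)).
Qed.

Lemma Cc_support_nat (R : realType) (f : R -> R) : Cc f ->
  exists W : nat, forall t : R, W%:R < `|t| -> f t = 0.
Proof.
case=> _ [M f_supp]; exists (Num.truncn `|M|).+1 => t Wt; apply: f_supp.
by apply: le_lt_trans Wt; rewrite (le_trans (ler_norm M)) // ltW // truncnS_gt.
Qed.

Lemma dense_windows_dens_gt0 (R : realType) L R1 (d : R) :
  (0 < R1)%N -> dense_windows L R1 -> dens_seq R L @ \oo --> d -> 0 < d.
Proof.
move=> R1_gt0 dense dens_d.
apply: lt_le_trans (_ : ((2 * R1)%:R)^-1 <= d).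
  by rewrite invr_gt0 ltr0n muln_gt0.
rewrite -(cvg_lim _ dens_d) //; apply: limr_ge; first by apply/cvg_ex; exists d.
near=> a; have a_gt0 : (0 < a)%N by near: a; exact: nbhs_infty_gt.
rewrite /dens_seq ler_pdivlMr ?ltr0n ?muln_gt0 // mulrC ler_pdivrMr ?ltr0n ?muln_gt0 //.
have : (R1 < a)%N by near: a; exact: nbhs_infty_gt.
by rewrite -natrM ler_nat; have := dense a; nia.
Unshelve. all: by end_near.
Qed.

Lemma pair_sum_Fwin_ratio (R : realType) L (f : R -> R) (d I : R) :
  d != 0 -> dens_seq R L @ \oo --> d -> dens_autocorr_seq L f @ \oo --> I ->
  forall eps, 0 < eps -> exists a0, forall a, (a0 <= a)%N ->
    `|pair_sum (Fwin L a) f - d^-1 * I * (size (Fwin L a))%:R| <=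
      eps * (size (Fwin L a))%:R.
Proof.
move=> d_neq0 dens_d autocorr_I eps eps_gt0.
have : (fun a => dens_autocorr_seq L f a / dens_seq R L a) @ \oo --> I / d.
  by apply: cvgM => //; exact: cvgV.
move/cvgrPdist_le => /(_ eps eps_gt0) [a0 _ a0_ratio].
exists a0.+1 => a a0a; have := a0_ratio a (ltnW a0a).
rewrite /dens_autocorr_seq /dens_seq invf_div mulrA.
rewrite divfK ?pnatr_eq0 ?muln_eq0 //; last by lia.
set P := pair_sum _ _; set c := size _.
have [c0|c_gt0] := posnP c.
  have /size0nil Fa0 : c = 0%N by [].
  by rewrite /P Fa0 c0 /pair_sum big_nil !mulr0 subrr normr0.
by rewrite dist_ratio_le ?ltr0n // [d^-1 * I]mulrC.
Qed.

Theorem theorem6p1 (R : realType) (L : set int)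
  (gamma : {measure set R -> \bar R}) :
  rel_dense R L ->
  vague_cvg (dens_autocorr_seq L) gamma ->
  exists d : R,
    [/\ dens_seq R L @ \oo --> d,
        gamma [set 0] = d%:E,
        d != 0,
        dens_seq R (Gamma_set L) @ \oo --> (0 : R) &
        forall f : R -> R, Cc f ->
          count_autocorr_seq (Gamma_set L) f @ \oo -->
            d^-1 * fine (\int[gamma]_x (f x)%:E)].
Proof.
move=> rel_denseL vague.
have [R1 [R1_gt0 dense]] := rel_dense_windows rel_denseL.
have [d [dens_d gamma0]] := vague_dens_measure0 vague.
have d_gt0 := dense_windows_dens_gt0 R1_gt0 dense dens_d.
exists d; split => //; first by rewrite gt_eqF.
  exact: dens_Gamma_cvg0.
move=> f f_Cc; have [W f_supp] := Cc_support_nat f_Cc.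
apply: (count_autocorr_Gamma_cvg f_supp R1_gt0 dense).
exact: pair_sum_Fwin_ratio (lt0r_neq0 d_gt0) dens_d (vague f f_Cc).2.
Qed.
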